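(* Let $\mathscr T=(V,\mathcal E)$ be the directed Cartesian product of directed trees $\mathscr T_1,\dots,\mathscr T_d$. Then (i) $\mathscr T$ has no circuits; (ii) $\mathscr T$ is connected; (iii) $\mathscr T$ has at most one root; (iv) $\mathrm{card}(\mathsf{Chi}(u)\cap\mathsf{Chi}(v))\le1$ for all $u,v\in V$ with $u\ne v$.
   Context: A directed graph is a pair $(V,\mathcal E)$ with $\mathcal E\subseteq (V\times V)\setminus\{(v,v):v\in V\}$. A circuit is a finite sequence $v_1,\dots,v_n$ ($n\ge2$) of distinct vertices with $(v_i,v_{i+1})\in\mathcal E$ for $i<n$ and $(v_n,v_1)\in\mathcal E$. The graph is connected if any two distinct vertices $u,v$ are joined by a finite sequence of distinct vertices $u=v_1,\dots,v_n=v$ with $(v_i,v_{i+1})$ or $(v_{i+1},v_i)\in\mathcal E$ for each $i$. A root is a vertex $v$ with no $u$ such that $(u,v)\in\mathcal E$. A directed tree is a connected directed graph without circuits in which every non-root vertex has exactly one $u$ with $(u,v)\in\mathcal E$. All directed trees are assumed leafless (each vertex has at least one $w$ with $(v,w)\in\mathcal E$). $\mathsf{Chi}(u)=\{v:(u,v)\in\mathcal E\}$. The directed Cartesian product of directed trees $\mathscr T_j=(V_j,\mathcal E_j)$ is $V=V_1\times\dots\times V_d$ with $(v,w)\in\mathcal E$ iff there is $k$ with $(v_k,w_k)\in\mathcal E_k$ and $w_j=v_j$ for $j\ne k$. *)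

From Stdlib Require Import List.
From mathcomp Require Import ssreflect ssrbool eqtype ssrnat fintype.
Import ListNotations.

Section Graphs.
Context {V : Type} (E : V -> V -> Prop).

Definition directed_graph : Prop := forall v, ~ E v v.

Fixpoint chain (R : V -> V -> Prop) (l : list V) : Prop :=
  match l with
  | x :: ((y :: _) as t) => R x y /\ chain R t
  | _ => True
  end.

Definition is_circuit (l : list V) : Prop :=
  2 <= length l /\ NoDup l /\ chain E l /\
  match l with x :: _ => E (last l x) x | [] => False end.

Definition connected : Prop :=
  forall u v, u <> v ->
    exists l : list V, NoDup (u :: l) /\ last (u :: l) u = v /\
      chain (fun a b => E a b \/ E b a) (u :: l).

Definition is_root (v : V) : Prop := forall u, ~ E u v.

Definition Chi (u : V) : V -> Prop := fun v => E u v.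

(* leafless directed tree *)
Definition directed_tree : Prop :=
  directed_graph /\ connected /\ (forall l, ~ is_circuit l) /\
  (forall v, ~ is_root v -> exists! u, E u v) /\
  (forall v, exists w, E v w).

End Graphs.

Definition prod_vertex {d : nat} (V : 'I_d -> Type) : Type := forall j, V j.

Definition prod_edge {d : nat} {V : 'I_d -> Type}
  (E : forall j, V j -> V j -> Prop) (v w : prod_vertex V) : Prop :=
  exists k, E k (v k) (w k) /\ forall j, j <> k -> w j = v j.

(* Projecting a circuit onto the coordinate moved by one of its edges
   gives an edge of a tree together with a walk back, which trees forbid; roots
   project to roots; two vertices are joined by changing one coordinate at a
   time; and a common child of u <> v must advance u in one coordinate and v
   in another, which determines it. *)
From Stdlib Require Import List.
From mathcomp Require Import ssreflect ssrbool eqtype ssrnat fintype.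
From Stdlib Require Import Relations Classical FunctionalExtensionality.
From mathcomp Require Import zify.
Import ListNotations.

Definition undirected {A : Type} (S : A -> A -> Prop) (a b : A) : Prop :=
  S a b \/ S b a.

Section Walks.
Context {A : Type} (S : A -> A -> Prop).

Lemma last_cons_default (a : A) l d d' : last (a :: l) d = last (a :: l) d'.
Proof. by elim: l a => [|b l IH] a //=; apply: IH. Qed.

Lemma last_app_cons (l1 : list A) a l2 d :
  last (l1 ++ a :: l2) d = last (a :: l2) d.
Proof. by elim: l1 => //= b l1 <-; case: l1. Qed.

Lemma chain_app_suffix l1 x l2 : chain S (l1 ++ x :: l2) -> chain S (x :: l2).
Proof. by elim: l1 => [|b [|c l1] IH] //= [_ H]; apply: IH. Qed.

Lemma chain_clos_rt l u : chain S (u :: l) -> clos_refl_trans _ S u (last (u :: l) u).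
Proof.
elim: l u => [|b l IH] u; first by move=> _; apply: rt_refl.
move=> [Sstep Hc]; apply: rt_trans (rt_step _ _ _ _ Sstep) _.
change (last _ u) with (last (b :: l) u).
by rewrite (last_cons_default b l u b); apply: IH.
Qed.

Lemma clos_rt_chain u v : clos_refl_trans _ S u v ->
  exists l, chain S (u :: l) /\ last (u :: l) u = v.
Proof.
move=> H; elim: (clos_rt_rt1n _ _ _ _ H) => [x|x y z Sxy _ [l [Hc <-]]]; first by exists [].
by exists (y :: l); split => //=; apply: last_cons_default.
Qed.

(* A repeated vertex closes a loop, which is cut out of the walk. *)
Lemma chain_simple_path l u : chain S (u :: l) ->
  exists l', NoDup (u :: l') /\ last (u :: l') u = last (u :: l) u
    /\ chain S (u :: l').
Proof.
elim: l u => [|b l IH] u.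
  by move=> _; exists []; split => //; repeat constructor.
move=> [Sstep Hc]; have [p [Np [Lp Cp]]] := IH b Hc.
have Lub : last (u :: b :: l) u = last (b :: p) b
  by rewrite Lp /=; apply: last_cons_default.
case: (classic (In u (b :: p))) => [Hin | Nu].
- have [p1 [p2 Ep]] := in_split _ _ Hin.
  exists p2; split; last split.
  + by apply: (NoDup_app_remove_l p1); rewrite -Ep.
  + by rewrite Lub Ep last_app_cons; apply: last_cons_default.
  + by move: Cp; rewrite Ep; apply: chain_app_suffix.
- exists (b :: p); split; first exact: NoDup_cons.
  by rewrite Lub; split; [apply: last_cons_default | split].
Qed.

Lemma circuit_of_edge_return x y : (forall v, ~ S v v) ->
  S x y -> clos_refl_trans _ S y x -> exists c, is_circuit S c.
Proof.
move=> Sirr Sxy Ryx; have [l [Cl Ll]] := clos_rt_chain _ _ Ryx.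
have [p [Np [Lp Cp]]] := chain_simple_path _ _ Cl.
rewrite Ll in Lp; exists (y :: p); split; last by split; [|split; [|rewrite Lp]].
case: p {Np Cp} Lp => [|z p] //= Lp.
by subst y; case: (Sirr x Sxy).
Qed.

Lemma circuit_edge_return c : is_circuit S c ->
  exists x y, S x y /\ clos_refl_trans _ S y x.
Proof.
case: c => [|x [|y l]] [//= _ [_ [[Sxy Hc] Hlast]]].
exists x, y; split => //; apply: rt_trans (chain_clos_rt _ _ Hc) (rt_step _ _ _ _ _).
by rewrite (last_cons_default y l y x).
Qed.

End Walks.

Section DirectedTree.
Context {A : Type} (E : A -> A -> Prop) (hT : directed_tree E).

Lemma tree_irrefl v : ~ E v v.
Proof. by case: hT. Qed.

Lemma tree_edge_no_return x y : E x y -> ~ clos_refl_trans _ E y x.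
Proof.
move=> Exy Ryx; have [c Hc] := circuit_of_edge_return E x y tree_irrefl Exy Ryx.
by case: hT => _ [_ [Nc _]]; apply: (Nc c).
Qed.

Lemma tree_parent_unique x z y : E x y -> E z y -> x = z.
Proof.
move=> Exy Ezy; case: hT => _ [_ [_ [Hpar _]]].
have [p [_ Hp]] := Hpar y (fun Hr => Hr x Exy).
by rewrite -(Hp x Exy) -(Hp z Ezy).
Qed.

(* Once a simple undirected path has taken an edge forwards it can only keep
   going forwards, since stepping back would reach a second parent. *)
Lemma simple_path_from_edge_not_to_root t a b :
  chain (undirected E) (a :: b :: t) -> NoDup (a :: b :: t) -> E a b ->
  ~ is_root E (last (b :: t) b).
Proof.
elim: t a b => [|c t IH] a b [_ Hc] Nabt Eab Hr; first exact: (Hr a).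
case: (Hc) => [[Ebc | Ecb] _].
- apply: (IH b c Hc _ Ebc); first by inversion Nabt.
  by rewrite (last_cons_default c t c b).
- have Nac : a <> c by move=> Eac; inversion Nabt; subst c; auto with datatypes.
  exact: Nac (tree_parent_unique a c b Eab Ecb).
Qed.

Lemma tree_root_unique r1 r2 : is_root E r1 -> is_root E r2 -> r1 = r2.
Proof.
move=> Hr1 Hr2; apply: NNPP => Nr; case: hT => _ [Hcon _].
have [[|b t] [Nl [Ll Cl]]] := Hcon r1 r2 Nr; first by case: Nr.
case: (Cl) => [[Er1b | Ebr1] _]; last exact: (Hr1 b).
apply: (simple_path_from_edge_not_to_root t r1 b Cl Nl Er1b).
by rewrite (last_cons_default b t b r1) -[last _ r1]/(last (r1 :: b :: t) r1) Ll.
Qed.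

Lemma tree_undirected_rt a b : clos_refl_trans _ (undirected E) a b.
Proof.
case: (classic (a = b)) => [-> | Nab]; first exact: rt_refl.
case: hT => _ [Hcon _]; have [l [_ [<- Cl]]] := Hcon a b Nab.
exact: chain_clos_rt.
Qed.

End DirectedTree.

Section CartesianProduct.
Context (d : nat) (V : 'I_d -> Type) (E : forall j, V j -> V j -> Prop).

Local Notation PE := (prod_edge E).

Lemma dfwith_self (f : prod_vertex V) k : dfwith f (f k) = f.
Proof.
by apply: functional_extensionality_dep => j; case: dfwithP.
Qed.

Lemma prod_edge_dfwith w k (a b : V k) : E k a b -> PE (dfwith w a) (dfwith w b).
Proof.
move=> Eab; exists k; rewrite !dfwith_in; split => // j /eqP Njk.
by rewrite !dfwith_out // eq_sym.
Qed.

Lemma prod_rt_dfwith w k (a b : V k) :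
  clos_refl_trans _ (undirected (E k)) a b ->
  clos_refl_trans _ (undirected PE) (dfwith w a) (dfwith w b).
Proof.
elim=> [x y [Exy | Eyx] | x | x y z _ IHxy _ IHyz].
- by apply: rt_step; left; apply: prod_edge_dfwith.
- by apply: rt_step; right; apply: prod_edge_dfwith.
- exact: rt_refl.
- exact: rt_trans IHxy IHyz.
Qed.

Lemma prod_edge_proj k x y : PE x y -> clos_refl_trans _ (E k) (x k) (y k).
Proof.
move=> [k' [Ek' Hk']]; case: (eqVneq k k') => [-> | /eqP Nkk'].
- exact: rt_step.
- by rewrite Hk' //; apply: rt_refl.
Qed.

Lemma prod_rt_proj k x y :
  clos_refl_trans _ PE x y -> clos_refl_trans _ (E k) (x k) (y k).
Proof.
elim=> [a b | a | a b c _ IHab _ IHbc]; first exact: prod_edge_proj.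
- exact: rt_refl.
- exact: rt_trans IHab IHbc.
Qed.

Lemma prod_root_proj w k : is_root PE w -> is_root (E k) (w k).
Proof.
move=> Hw p Epw; apply: (Hw (dfwith w p)).
by rewrite -{2}(dfwith_self w k); apply: prod_edge_dfwith.
Qed.

Hypothesis hT : forall j, directed_tree (E j).

(* Correct the coordinates one at a time, from the last one down. *)
Lemma prod_rt_agree_above m u v : (forall j : 'I_d, m <= j -> u j = v j) ->
  clos_refl_trans _ (undirected PE) u v.
Proof.
elim: m u => [|m IH] u Huv.
  have -> : u = v by apply: functional_extensionality_dep => j; apply: Huv.
  exact: rt_refl.
case: (ltnP m d) => [Hm | Hdm]; last first.
  by apply: IH => j Hj; apply: Huv; have := ltn_ord j; lia.
pose k := Ordinal Hm.
apply: rt_trans (_ : clos_refl_trans _ _ (dfwith u (v k)) _).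
  by rewrite -{1}(dfwith_self u k); apply/prod_rt_dfwith/tree_undirected_rt.
apply: IH => j Hj; case: (eqVneq k j) => [<- | Nkj]; first by rewrite dfwith_in.
rewrite dfwith_out //; apply: Huv.
have Nmj : m <> j by move=> Emj; move/eqP: Nkj; apply; apply: val_inj.
lia.
Qed.

Lemma prod_no_circuit c : ~ is_circuit PE c.
Proof.
move=> /circuit_edge_return [x [y [[k [Exy _]] Ryx]]].
exact: tree_edge_no_return _ (hT k) _ _ Exy (prod_rt_proj k _ _ Ryx).
Qed.

Lemma prod_connected : connected PE.
Proof.
move=> u v _.
have [l [Cl Ll]] := clos_rt_chain _ _ _ (prod_rt_agree_above d u v
  (fun j Hj => ltac:(have := ltn_ord j; lia))).
have [p [Np [Lp Cp]]] := chain_simple_path _ _ _ Cl.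
by exists p; rewrite Lp Ll.
Qed.

Lemma prod_root_unique u v : is_root PE u -> is_root PE v -> u = v.
Proof.
move=> Hu Hv; apply: functional_extensionality_dep => k.
exact: tree_root_unique _ (hT k) _ _ (prod_root_proj u k Hu) (prod_root_proj v k Hv).
Qed.

(* w agrees with u except in the single coordinate where u steps forward
   to v. *)
Lemma prod_common_child_coord u v w : u <> v -> PE u w -> PE v w ->
  forall j, (E j (u j) (v j) -> w j = v j) /\ (~ E j (u j) (v j) -> w j = u j).
Proof.
move=> Nuv [a [Ea Hwa]] [b [Eb Hwb]].
have Nab : a <> b.
  move=> Eab; subst b; apply: Nuv; apply: functional_extensionality_dep => j.
  case: (eqVneq j a) => [-> | /eqP Nja]; last by rewrite -Hwa // -Hwb.
  exact: tree_parent_unique _ (hT a) _ _ _ Ea Eb.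
move=> j; case: (eqVneq j a) => [-> | /eqP Nja].
  by rewrite Hwb //; split=> // NE; case: NE; rewrite -(Hwb a Nab).
split=> [Euv | _]; last exact: Hwa.
case: (eqVneq j b) => [Ejb | /eqP Njb]; last exact: Hwb.
subst j; rewrite Hwa // in Eb.
by case: (tree_edge_no_return _ (hT b) _ _ Euv); apply: rt_step.
Qed.

Lemma prod_common_child_unique u v w1 w2 : u <> v ->
  PE u w1 -> PE v w1 -> PE u w2 -> PE v w2 -> w1 = w2.
Proof.
move=> Nuv Hu1 Hv1 Hu2 Hv2; apply: functional_extensionality_dep => j.
have [F1 B1] := prod_common_child_coord u v w1 Nuv Hu1 Hv1 j.
have [F2 B2] := prod_common_child_coord u v w2 Nuv Hu2 Hv2 j.
by case: (classic (E j (u j) (v j))) => H; [rewrite F1 ?F2 | rewrite B1 ?B2].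
Qed.

End CartesianProduct.

Theorem mainTheorem9 (d : nat) (V : 'I_d -> Type)
  (E : forall j, V j -> V j -> Prop)
  (hT : forall j, directed_tree (E j)) :
  (forall l : list (prod_vertex V), ~ is_circuit (prod_edge E) l) /\
  connected (prod_edge E) /\
  (forall u v : prod_vertex V,
      is_root (prod_edge E) u -> is_root (prod_edge E) v -> u = v) /\
  (forall u v : prod_vertex V, u <> v ->
      forall w1 w2, Chi (prod_edge E) u w1 -> Chi (prod_edge E) v w1 ->
        Chi (prod_edge E) u w2 -> Chi (prod_edge E) v w2 -> w1 = w2).
Proof.
split; first exact: prod_no_circuit.
split; first exact: prod_connected.
split; first exact: prod_root_unique.
move=> u v Nuv w1 w2; exact: prod_common_child_unique.
Qed.
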